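(* For every integer $n\ge1$, the polynomials $\operatorname{num}(n,x)$ and $\operatorname{den}(n,x)$ are coprime in $\mathbb{Z}[x]$, i.e. $\gcd(\operatorname{num}(n,x),\operatorname{den}(n,x))=1$.
   Context: A partition $\lambda$ of $n\ge 0$ (written $\lambda\vdash n$) is a finite nonincreasing sequence of positive integers summing to $n$; $m_\lambda(i)$ denotes the number of parts of $\lambda$ equal to $i$ (the empty partition is the unique partition of $0$). For $\lambda\vdash n$ define $$h_\lambda(x)=\prod_{i\ge1}(1+x^i)^{\lfloor n/i\rfloor-m_\lambda(i)}\in\mathbb{Z}[x],\qquad \operatorname{den}^*(n,x)=\prod_{i\ge1}(1+x^i)^{\lfloor n/i\rfloor},$$ (finite products since $\lfloor n/i\rfloor=0$ for $i>n$), so that $\sum_{\lambda\vdash n}\prod_j(1+x^{\lambda_j})^{-1}=\sum_{\lambda\vdash n}h_\lambda(x)/\operatorname{den}^*(n,x)$. Let $G(n,x)=\gcd\{h_\lambda(x):\lambda\vdash n\}$ in $\mathbb{Z}[x]$ (normalized to have positive leading coefficient; it is a product of cyclotomic polynomials), and define $$\operatorname{num}(n,x)=\frac{1}{G(n,x)}\sum_{\lambda\vdash n}h_\lambda(x),\qquad \operatorname{den}(n,x)=\frac{\operatorname{den}^*(n,x)}{G(n,x)}.$$ Note $G(n,x)$ is the gcd of the summands, not of $\sum_\lambda h_\lambda$ and $\operatorname{den}^*$. *)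

From HB Require Import structures.
From mathcomp Require Import all_boot all_order all_algebra.
Set Implicit Arguments. Unset Strict Implicit. Unset Printing Implicit Defensive.
Import Order.TTheory GRing.Theory Num.Theory.
Local Open Scope ring_scope.

(* A partition lambda of n is encoded by its multiplicity function:
   m : 'I_n -> 'I_n.+1, where m i = m_lambda(i+1) is the number of parts
   equal to i+1 (parts are in 1..n, multiplicities are <= n).
   m encodes a partition of n iff sum_i (i+1) * m i = n. This is a bijection
   between partitions of n and such multiplicity functions. *)
Definition mult_fun (n : nat) := {ffun 'I_n -> 'I_n.+1}.

Definition is_partition (n : nat) (m : mult_fun n) : bool :=
  (\sum_(i < n) i.+1 * m i)%N == n.

Definition h_part (n : nat) (m : mult_fun n) : {poly int} :=
  \prod_(i < n) (1 + 'X^(i.+1)) ^+ (n %/ i.+1 - m i)%N.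

Definition den_star (n : nat) : {poly int} :=
  \prod_(i < n) (1 + 'X^(i.+1)) ^+ (n %/ i.+1)%N.

Definition sum_h (n : nat) : {poly int} :=
  \sum_(m : mult_fun n | is_partition m) h_part m.

Definition zdvd (d p : {poly int}) : Prop := exists q : {poly int}, p = q * d.

Definition is_gcd_h (n : nat) (G : {poly int}) : Prop :=
  (forall m : mult_fun n, is_partition m -> zdvd G (h_part m)) /\
  (forall d : {poly int},
      (forall m : mult_fun n, is_partition m -> zdvd d (h_part m)) -> zdvd d G).

Definition zcoprime (a b : {poly int}) : Prop :=
  forall d : {poly int}, zdvd d a -> zdvd d b -> d \is a GRing.unit.

From Stdlib Require Import Rtrigo1 Rtrigo_def Rdefinitions RIneq.
From mathcomp Require Import Rstruct complex.
From HB Require Import structures.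
From mathcomp Require Import all_boot all_order all_algebra all_field.
From mathcomp Require Import zify ring lra.
Set Implicit Arguments. Unset Strict Implicit. Unset Printing Implicit Defensive.
Import Order.TTheory GRing.Theory Num.Theory.
Local Open Scope ring_scope.

(** Every root of [den] is a root of some [1 + x^i], hence a primitive
   [2j]-th root of unity with [j <= n]; as [Phi_(2j)] is irreducible over Q,
   it suffices to show [num(beta) <> 0] for [beta = exp(i pi / j)].
   If [i] is an odd multiple of [j] then [1 + x^j] divides [1 + x^i], so every
   [h_lambda] is divisible by [D = (1 + x^j)^e] ([common_factor]), with [e] the
   least exponent of [1 + x^j] in any [h_lambda]; thus [D] divides [G] and
   [num * (G / D)] is the sum of the [h_lambda / D] ([reduced_h]).  At [beta]
   the term [h_lambda / D] vanishes unless [lambda] has [n / j] parts equal to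
   [j] and no larger part.  For these extremal [lambda], the identity
   [1 + beta^i = zeta^i * 2 cos(i pi / 2j)] with [zeta^2 = beta] gives
   [(h_lambda / D)(beta) = c_lambda * Z] ([ev_reduced_h]), where [Z <> 0] does
   not depend on [lambda], because the exponents of [zeta] always add up to the
   same number, and [c_lambda > 0].  Hence the sum does not vanish at [beta]. *)

Definition odd_multiple (j p : nat) : bool := (j %| p)%N && odd (p %/ j).

Lemma odd_multiple_ge j p : (0 < p)%N -> odd_multiple j p -> (j <= p)%N.
Proof. by move=> p_gt0 /andP[/(dvdn_leq p_gt0)]. Qed.

Lemma odd_multiple_gt j p :
  (0 < j)%N -> odd_multiple j p -> (j < p)%N -> (3 * j <= p)%N.
Proof.
move=> j_gt0 /andP[/dvdnP[k ->]]; rewrite mulnK //.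
by case: k => [|[|[|k]]] //= _; rewrite ?mul1n ?ltnn //; lia.
Qed.

Section PrimitiveRootOfEvenOrder.
Variables (R : idomainType) (j : nat) (z : R).
Hypothesis prim_z : (j.*2).-primitive_root z.

Let j_gt0 : (0 < j)%N.
Proof. by have := prim_order_gt0 prim_z; rewrite double_gt0. Qed.

Lemma prim_expr_half : z ^+ j = -1.
Proof.
have : (z ^+ j - 1) * (z ^+ j + 1) = 0.
  by rewrite -subr_sqr -exprM muln2 prim_expr_order // expr1n subrr.
move/eqP; rewrite mulf_eq0 subr_eq0 addr_eq0 => /orP[|/eqP //].
rewrite -(prim_order_dvd prim_z) => /(dvdn_leq j_gt0).
by rewrite leqNgt -addnn -{1}[j]add0n ltn_add2r j_gt0.
Qed.

Lemma prim_expr_eqN1 p : (z ^+ p == -1) = odd_multiple j p.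
Proof.
have N1_neq1 : (-1 : R) != 1.
  rewrite -prim_expr_half -(prim_order_dvd prim_z) gtnNdvd //.
  by rewrite -addnn -{1}[j]add0n ltn_add2r.
have [[k ->]|ndvd] := altP (@dvdnP j p); rewrite /odd_multiple.
  rewrite dvdn_mull // mulnK // mulnC exprM prim_expr_half -signr_odd.
  by case: (odd k); rewrite ?eqxx // eq_sym (negbTE N1_neq1).
rewrite (negbTE ndvd); apply/negbTE/eqP => zpN1.
have : (j.*2 %| p.*2)%N by rewrite (prim_order_dvd prim_z) -muln2 exprM zpN1 sqrrN expr1n.
by rewrite -!muln2 dvdn_pmul2r // (negbTE ndvd).
Qed.

End PrimitiveRootOfEvenOrder.

Lemma root_Cyclotomic (R : idomainType) k (z : R) :
  k.-primitive_root z -> root (map_poly intr 'Phi_k) z.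
Proof.
move=> prim_z; have k_gt0 := prim_order_gt0 prim_z.
have eval_divisors d : (0 < d)%N ->
    \prod_(e <- divisors d) (map_poly intr 'Phi_e).[z] = z ^+ d - 1.
  move=> d_gt0; rewrite -horner_prod -rmorph_prod prod_Cyclotomic //.
  by rewrite rmorphB rmorph1 /= map_polyXn !hornerE.
have /eqP := eval_divisors k k_gt0; rewrite prim_expr_order // subrr.
rewrite prodf_seq_eq0 => /hasP[d]; rewrite -dvdn_divisors // => dvd_dk Phi_d_z.
have d_gt0 : (0 < d)%N := dvdn_gt0 k_gt0 dvd_dk.
suff /eqP <- : d == k by [].
have /eqP := eval_divisors d d_gt0; rewrite (big_rem d) -?dvdn_divisors //=.
rewrite (eqP Phi_d_z) mul0r eq_sym subr_eq0 -(prim_order_dvd prim_z) => dvd_kd.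
by rewrite eqn_dvd dvd_dk.
Qed.

Lemma map_poly_ratr_int (F : numFieldType) (p : {poly int}) :
  map_poly ratr (map_poly (intr : int -> rat) p) = map_poly (intr : int -> F) p.
Proof. by rewrite -map_poly_comp; apply: eq_map_poly => x /=; rewrite ratr_int. Qed.

Lemma Cyclotomic_roots_sub (p : {poly int}) k (a : algC) :
    k.-primitive_root a -> root (map_poly intr p) a ->
  forall (F : numFieldType) (z : F),
    root (map_poly intr 'Phi_k) z -> root (map_poly intr p) z.
Proof.
move=> prim_a pa F z Phi_z; have [pr [def_pr _] dvd_pr] := minCpolyP a.
have pr_Phi : pr = map_poly intr 'Phi_k.
  apply: (map_poly_inj (ratr : {rmorphism rat -> algC})).
  rewrite -def_pr map_poly_ratr_int (minCpoly_cyclotomic prim_a).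
  by rewrite (Cintr_Cyclotomic prim_a).
move: pa; rewrite -(map_poly_ratr_int algC p) dvd_pr pr_Phi => /dvdpP[g def_p].
by rewrite -map_poly_ratr_int def_p rmorphM rootM /= map_poly_ratr_int Phi_z orbT.
Qed.

(* Terms of type [Rdefinitions.R] are parsed in [R_scope]; this alias keeps
   the ring-scope notations. *)
Definition real : Type := Rdefinitions.R.

Section RootOfMinusOne.
Variable j : nat.
Hypothesis j_gt0 : (0 < j)%N.

Definition theta : real := PI / (j.*2)%:R.
Definition angle (k : nat) : real := k%:R * theta.
Definition zeta : real[i] := Complex (cos theta) (sin theta).
Definition beta : real[i] := zeta ^+ 2.
Definition cos_weight (p : nat) : real := 2 * cos (angle p).

Lemma zeta_exp k : zeta ^+ k = Complex (cos (angle k)) (sin (angle k)).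
Proof.
elim: k => [|k IHk]; first by rewrite expr0 /angle mul0r cos_0 sin_0.
rewrite exprS IHk /angle mulrS mulrDl mul1r cosD sinD.
by congr Complex; rewrite addrC.
Qed.

Lemma theta_gt0 : 0 < theta.
Proof. by rewrite divr_gt0 ?ltr0n ?double_gt0 //; apply/RltP/PI_RGT_0. Qed.

Lemma PI_theta : PI = (j.*2)%:R * theta.
Proof. by rewrite mulrC divfK // pnatr_eq0 double_eq0 -lt0n. Qed.

Lemma beta_exp k : beta ^+ k = zeta ^+ (k.*2).
Proof. by rewrite -exprM mul2n. Qed.

Lemma beta_exp_half : beta ^+ j = -1.
Proof.
rewrite beta_exp zeta_exp /angle -PI_theta cos_PI sin_PI.
by rewrite -(rmorphN1 (real_complex real)).
Qed.

Lemma beta_exp_neq1 d : (0 < d < j)%N -> beta ^+ d != 1.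
Proof.
case/andP=> d_gt0 d_lt_j; apply/negP => /eqP /(congr1 (@complex.Im _)).
rewrite beta_exp zeta_exp /= => /eqP; rewrite gt_eqF //.
apply/RltP; apply: sin_gt_0; apply/RltP; rewrite /angle.
  by rewrite mulr_gt0 ?theta_gt0 // ltr0n double_gt0.
by rewrite PI_theta ltr_pM2r ?theta_gt0 // ltr_nat ltn_double.
Qed.

Lemma beta_prim : (j.*2).-primitive_root beta.
Proof.
have beta_2j : beta ^+ j.*2 = 1 by rewrite -addnn exprD beta_exp_half mulrNN mulr1.
have j2_gt0 : (0 < j.*2)%N by rewrite double_gt0.
have [m prim_m dvd_m2j] := prim_order_exists j2_gt0 beta_2j.
have m_gt0 := prim_order_gt0 prim_m.
suff /eqP <- : m == j.*2 by [].
have [k def2j] := dvdnP dvd_m2j.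
case: k def2j => [|[|k]] def2j; [by move: j_gt0; lia | by rewrite def2j mul1n |].
have m_le_j : (m <= j)%N by move: def2j; lia.
case: (ltngtP m j) m_le_j => [m_lt_j _|//|m_j _].
  have := @beta_exp_neq1 m; rewrite m_gt0 m_lt_j (prim_expr_order prim_m) eqxx.
  by move/(_ isT).
have := prim_expr_order prim_m; rewrite m_j beta_exp_half => /eqP.
by rewrite eq_sym -addr_eq0 -[1 + 1]/(2%:R) pnatr_eq0.
Qed.

Lemma one_plus_beta_exp p :
  1 + beta ^+ p = zeta ^+ p * real_complex real (cos_weight p).
Proof.
rewrite beta_exp !zeta_exp /cos_weight.
have -> : angle p.*2 = angle p + angle p by rewrite /angle -addnn natrD mulrDl.
rewrite cosD sinD.
have := sin2_cos2 (angle p); rewrite /Rsqr !RmultE RplusE R1E.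
set c := cos (angle p); set s := sin (angle p) => pythagoras.
apply/eqP; rewrite eq_complex /=.
by apply/andP; split; apply/eqP; [rewrite -{1}pythagoras|]; ring.
Qed.

Lemma cos_weight_gt0 p : (p < j)%N -> 0 < cos_weight p.
Proof.
move=> p_lt_j; rewrite /cos_weight mulr_gt0 //.
have pi_gt0 : (0 : real) < PI by apply/RltP/PI_RGT_0.
have p_ge0 : (0 : real) <= p%:R by rewrite ler0n.
have p1_le_j : (p%:R + 1 <= j%:R :> real) by rewrite natr1 ler_nat.
have th_gt0 := theta_gt0; have pi_th := PI_theta; rewrite -muln2 natrM in pi_th.
have two : IZR 2 = 2%:R :> real by rewrite IZRposE INRE.
apply/RltP; apply: cos_gt_0; apply/RltP; rewrite ?RoppE RdivE two /angle; nra.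
Qed.

End RootOfMinusOne.

Section Partitions.
Variables n j : nat.
Hypotheses (j_gt0 : (0 < j)%N) (j_le_n : (j <= n)%N).
Implicit Types m : mult_fun n.

Local Notation q := (n %/ j)%N.
Local Notation r := (n %% j)%N.

Definition h_exp m (i : 'I_n) : nat := (n %/ i.+1 - m i)%N.
Definition oddmul_parts m : nat := (\sum_(i < n | odd_multiple j i.+1) m i)%N.
Definition oddmul_max : nat := (\sum_(i < n | odd_multiple j i.+1) n %/ i.+1)%N.

Lemma partition_mult_le m i : is_partition m -> (m i <= n %/ i.+1)%N.
Proof.
move/eqP=> def_n; rewrite leq_divRL // mulnC -[X in (_ <= X)%N]def_n.
by rewrite (bigD1 i) //= leq_addr.
Qed.

Lemma oddmul_parts_le m : is_partition m -> (oddmul_parts m <= q)%N.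
Proof.
move/eqP=> def_n; rewrite leq_divRL // mulnC big_distrr -[X in (_ <= X)%N]def_n.
rewrite [X in (_ <= X)%N](bigID (fun i : 'I_n => odd_multiple j i.+1)) /=.
apply: leq_trans (leq_addr _ _); apply: leq_sum => i odd_i.
by rewrite leq_mul2r odd_multiple_ge ?orbT.
Qed.

Lemma sum_oddmul_h_exp m : is_partition m ->
  (\sum_(i < n | odd_multiple j i.+1) h_exp m i = oddmul_max - oddmul_parts m)%N.
Proof. by move=> part_m; rewrite sumnB // => i _; apply: partition_mult_le. Qed.

Definition ord_j : 'I_n := Ordinal (leq_trans (eq_leq (prednK j_gt0)) j_le_n).

Lemma ord_jS : (ord_j : nat).+1 = j.
Proof. exact: prednK. Qed.

Lemma ord_jP (i : 'I_n) : (i.+1 == j) = (i == ord_j).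
Proof. by rewrite -val_eqE /= -[in RHS]eqSS prednK. Qed.

Lemma odd_multiple_jj : odd_multiple j j.
Proof. by rewrite /odd_multiple dvdnn divnn j_gt0. Qed.

Lemma div_le_oddmul_max : (q <= oddmul_max)%N.
Proof.
rewrite /oddmul_max (bigD1 ord_j) /=; last by rewrite ord_jS odd_multiple_jj.
by rewrite ord_jS leq_addr.
Qed.

Definition partition_j : mult_fun n :=
  [ffun i : 'I_n => inord ((i.+1 == j) * q + ((i : nat) == 0%N) * r)].

Lemma partition_jE i :
  (partition_j i : nat) = ((i == ord_j) * q + ((i : nat) == 0%N) * r)%N.
Proof.
rewrite ffunE -ord_jP inordK // ltnS.
have := divn_eq n j; have := ltn_pmod n j_gt0.
by case: (i.+1 == j); case: ((i : nat) == 0%N) => /=; nia.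
Qed.

Lemma is_partition_j : is_partition partition_j.
Proof.
have n_gt0 : (0 < n)%N := leq_trans j_gt0 j_le_n.
apply/eqP; under eq_bigr => i _ do rewrite partition_jE mulnDr.
rewrite big_split /= (bigD1 ord_j) //= eqxx ord_jS big1 => [|i /negbTE->]; last first.
  by rewrite muln0.
rewrite (bigD1 (Ordinal n_gt0)) //= big1 => [|i ne_i0]; last first.
  suff /negbTE-> : (i : nat) != 0%N by rewrite mul0n muln0.
  by apply: contraNneq ne_i0 => i0; apply/eqP/val_inj.
by rewrite !mul1n !addn0 mulnC -divn_eq.
Qed.

Lemma oddmul_parts_partition_j : oddmul_parts partition_j = q.
Proof.
apply/eqP; rewrite eqn_leq oddmul_parts_le ?is_partition_j //.
rewrite /oddmul_parts (bigD1 ord_j) /=; last by rewrite ord_jS odd_multiple_jj.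
by rewrite partition_jE eqxx mul1n -addnA leq_addr.
Qed.

Definition small_weight : nat :=
  (\sum_(i < n | (i.+1 < j)%N) i.+1 * (n %/ i.+1) - r)%N.

Section Extremal.
Variable m : mult_fun n.
Hypotheses (part_m : is_partition m) (extremal_m : oddmul_parts m = q).

Lemma extremal_mult_gt (i : 'I_n) : (j < i.+1)%N -> m i = 0%N :> nat.
Proof.
move=> j_lt_i; apply/eqP; rewrite -leqn0 leqNgt; apply/negP => mi_gt0.
have part_bound (k : 'I_n) :
    (j * (if odd_multiple j k.+1 then m k : nat else 0) + (if k == i then j else 0)
      <= k.+1 * m k)%N.
  case: eqP => [->|_]; case odd_k: (odd_multiple j _).
  - by have := odd_multiple_gt j_gt0 odd_k j_lt_i; move: mi_gt0; nia.
  - by move: mi_gt0 j_lt_i; nia.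
  - by rewrite addn0 leq_mul2r odd_multiple_ge ?orbT.
  - by rewrite muln0.
have := @leq_sum _ (index_enum 'I_n) predT _ _ (fun k _ => part_bound k).
rewrite (eqP part_m) big_split /=.
rewrite -big_distrr -!big_mkcond big_pred1_eq /= -/(oddmul_parts m) extremal_m.
by have := divn_eq n j; have := ltn_pmod n j_gt0; lia.
Qed.

Lemma extremal_mult_j : m ord_j = q :> nat.
Proof.
rewrite -extremal_m /oddmul_parts (bigD1 ord_j) /=; last first.
  by rewrite ord_jS odd_multiple_jj.
rewrite big1 ?addn0 // => k /andP[odd_k ne_kj]; apply: extremal_mult_gt.
by rewrite ltn_neqAle odd_multiple_ge // andbT eq_sym ord_jP.
Qed.

Lemma extremal_mult_ge (i : 'I_n) : (j <= i.+1)%N -> m i = partition_j i :> nat.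
Proof.
move=> j_le_i; rewrite partition_jE.
have -> : (((i : nat) == 0%N) * r = 0)%N.
  case: eqP j_le_i => [-> j_le1|]; last by rewrite mul0n.
  have j1 : j = 1%N by apply/eqP; rewrite eqn_leq j_le1.
  by rewrite j1 modn1 muln0.
have [->|ne_ij] := eqVneq i ord_j; first by rewrite extremal_mult_j mul1n addn0.
rewrite extremal_mult_gt // ltn_neqAle j_le_i andbT eq_sym ord_jP.
by rewrite (negbTE ne_ij).
Qed.

Lemma extremal_small_sum : (\sum_(i < n | (i.+1 < j)%N) i.+1 * m i)%N = r.
Proof.
have large : (\sum_(i < n | ~~ (i.+1 < j)) i.+1 * m i = j * q)%N.
  rewrite (bigD1 ord_j) /= ?ord_jS ?ltnn // extremal_mult_j.
  rewrite big1 ?addn0 // => k /andP[].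
  rewrite -leqNgt leq_eqVlt eq_sym ord_jP => /orP[->//|j_lt_k] _.
  by rewrite extremal_mult_gt ?muln0.
have := eqP part_m; rewrite (bigID (fun i : 'I_n => (i.+1 < j)%N)) /= large.
by have := divn_eq n j; lia.
Qed.

Lemma extremal_small_h_exp :
  (\sum_(i < n | (i.+1 < j)%N) i.+1 * h_exp m i)%N = small_weight.
Proof.
rewrite /small_weight -extremal_small_sum -sumnB => [|i _].
  by apply: eq_bigr => i _; rewrite /h_exp mulnBr.
by rewrite leq_mul2l partition_mult_le ?orbT.
Qed.

End Extremal.

End Partitions.

Lemma monic_one_plus_Xn (R : nzRingType) k :
  (0 < k)%N -> (1 + 'X^k : {poly R}) \is monic.
Proof. by move=> k_gt0; rewrite addrC -polyC1 monicXnaddC. Qed.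

Section Factorization.
Variables n j : nat.
Hypotheses (j_gt0 : (0 < j)%N) (j_le_n : (j <= n)%N).
Implicit Types m : mult_fun n.

Definition alt_geom (p : nat) : {poly int} := \sum_(s < p %/ j) (- 'X^j) ^+ s.

Lemma one_plus_Xn_factor p :
  odd_multiple j p -> 1 + 'X^p = (1 + 'X^j) * alt_geom p.
Proof.
case/andP=> /dvdnP[k ->]; rewrite mulnK // => odd_k.
have := subrX1 (- 'X^j : {poly int}) k.
rewrite exprNn -signr_odd odd_k expr1 mulN1r -exprM mulnC => geom.
have opp_factor : - (1 + 'X^j) = - 'X^j - 1 :> {poly int} by ring.
by apply: oppr_inj; rewrite -mulNr /alt_geom mulnK // opp_factor -geom; ring.
Qed.

Definition h_factor m (i : 'I_n) : {poly int} :=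
  (if odd_multiple j i.+1 then alt_geom i.+1 else 1 + 'X^(i.+1)) ^+ h_exp m i.

Definition common_factor : {poly int} := (1 + 'X^j) ^+ (oddmul_max n j - n %/ j).

Definition reduced_h m : {poly int} :=
  (1 + 'X^j) ^+ (n %/ j - oddmul_parts j m) * \prod_(i < n) h_factor m i.

Lemma h_part_factor m : is_partition m -> h_part m = common_factor * reduced_h m.
Proof.
move=> part_m.
have -> : h_part m = \prod_(i < n)
    ((if odd_multiple j i.+1 then (1 + 'X^j) ^+ h_exp m i else 1) * h_factor m i).
  apply: eq_bigr => i _; rewrite /h_factor /h_exp.
  by case: ifP => [/one_plus_Xn_factor->|_]; rewrite ?exprMn ?mul1r.
rewrite big_split /= -big_mkcond prodrXr sum_oddmul_h_exp //.
rewrite /reduced_h /common_factor mulrA -exprD.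
have := oddmul_parts_le j_gt0 part_m; have := div_le_oddmul_max j_gt0 j_le_n.
by move=> le1 le2; congr (_ ^+ _ * _); lia.
Qed.

End Factorization.

Lemma beta_comm j : commr_rmorph (intr : int -> real[i]) (beta j).
Proof. by move=> x; apply: mulrC. Qed.

Section Evaluation.
Variables n j : nat.
Hypotheses (j_gt0 : (0 < j)%N) (j_le_n : (j <= n)%N).
Implicit Types m : mult_fun n.

Local Notation ev := (horner_morph (beta_comm j)).
Local Notation m_j := (partition_j n j).

Lemma ev_one_plus_Xn p : ev (1 + 'X^p) = 1 + beta j ^+ p.
Proof. by rewrite rmorphD rmorph1 rmorphXn /= horner_morphX. Qed.

Lemma ev_alt_geom p : ev (alt_geom j p) = (p %/ j)%:R.
Proof.
rewrite rmorph_sum /=.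
under eq_bigr do rewrite rmorphXn rmorphN rmorphXn /= horner_morphX beta_exp_half //.
by under eq_bigr do rewrite opprK expr1n; rewrite sumr_const card_ord.
Qed.

Lemma ev_h_factor_neq0 m i : ev (h_factor j m i) != 0.
Proof.
rewrite rmorphXn expf_neq0 //; case: ifP => [odd_i|not_odd] /=.
  by rewrite ev_alt_geom pnatr_eq0 -lt0n divn_gt0 // odd_multiple_ge.
by rewrite ev_one_plus_Xn addrC addr_eq0 (prim_expr_eqN1 (beta_prim j_gt0)) not_odd.
Qed.

Lemma ev_h_factor_small m (i : 'I_n) : (i.+1 < j)%N ->
  ev (h_factor j m i) =
    zeta j ^+ (i.+1 * h_exp m i) * real_complex real (cos_weight j i.+1 ^+ h_exp m i).
Proof.
move=> i_lt_j; rewrite /h_factor ifN; last first.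
  by apply: contraTN i_lt_j => /(odd_multiple_ge (ltn0Sn _)); rewrite -leqNgt.
by rewrite rmorphXn /= ev_one_plus_Xn one_plus_beta_exp exprMn -exprM rmorphXn.
Qed.

Definition extremal_weight m : real :=
  if oddmul_parts j m == (n %/ j)%N
  then \prod_(i < n | (i.+1 < j)%N) cos_weight j i.+1 ^+ h_exp m i else 0.

Definition extremal_phase : real[i] :=
  zeta j ^+ small_weight n j * \prod_(i < n | ~~ (i.+1 < j)%N) ev (h_factor j m_j i).

Lemma ev_reduced_h m : is_partition m ->
  ev (reduced_h j m) = real_complex real (extremal_weight m) * extremal_phase.
Proof.
move=> part_m; rewrite rmorphM rmorphXn /= ev_one_plus_Xn.
rewrite beta_exp_half // subrr /extremal_weight.
have [extremal_m|not_extremal] := eqVneq (oddmul_parts j m) (n %/ j)%N; last first.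
  have lt_q : (oddmul_parts j m < n %/ j)%N.
    by rewrite ltn_neqAle not_extremal oddmul_parts_le.
  by rewrite expr0n subn_eq0 leqNgt lt_q /= mul0r (rmorph0 (real_complex real)) mul0r.
rewrite extremal_m subnn expr0 mul1r rmorph_prod.
rewrite (bigID (fun i : 'I_n => (i.+1 < j)%N)) /=.
have -> : \prod_(i < n | ~~ (i.+1 < j)%N) ev (h_factor j m i) =
          \prod_(i < n | ~~ (i.+1 < j)%N) ev (h_factor j m_j i).
  apply: eq_bigr => i; rewrite -leqNgt => j_le_i.
  by rewrite /h_factor /h_exp (extremal_mult_ge j_gt0 j_le_n part_m extremal_m j_le_i).
rewrite (eq_bigr _ (@ev_h_factor_small m)) big_split /= prodrXr.
rewrite (extremal_small_h_exp j_gt0 j_le_n part_m extremal_m) -rmorph_prod.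
by rewrite /extremal_phase mulrCA mulrA.
Qed.

Lemma extremal_weight_ge0 m : 0 <= extremal_weight m.
Proof.
rewrite /extremal_weight; case: eqP => // _; apply: prodr_ge0 => i i_lt_j.
by rewrite exprn_ge0 // ltW // cos_weight_gt0.
Qed.

Lemma extremal_weight_partition_j : 0 < extremal_weight m_j.
Proof.
rewrite /extremal_weight oddmul_parts_partition_j // eqxx; apply: prodr_gt0 => i i_lt_j.
by rewrite exprn_gt0 // cos_weight_gt0.
Qed.

Lemma extremal_phase_neq0 : extremal_phase != 0.
Proof.
have zeta_neq0 : zeta j != 0.
  apply: contraTneq (beta_prim j_gt0) => zeta0; apply/negP => /prim_expr_order.
  rewrite /beta zeta0 -exprM expr0n muln_eq0 double_eq0 (gtn_eqF j_gt0) /=.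
  by move/eqP; rewrite eq_sym oner_eq0.
rewrite mulf_neq0 ?expf_neq0 //; apply/prodf_neq0 => i _.
exact: ev_h_factor_neq0.
Qed.

Lemma ev_sum_reduced_h_neq0 :
  \sum_(m : mult_fun n | is_partition m) ev (reduced_h j m) != 0.
Proof.
rewrite (eq_bigr _ (@ev_reduced_h)) -mulr_suml -rmorph_sum.
rewrite mulf_neq0 ?extremal_phase_neq0 // fmorph_eq0 gt_eqF //.
rewrite (bigD1 m_j) ?is_partition_j //= ltr_pwDl ?extremal_weight_partition_j //.
by apply: sumr_ge0 => m _; apply: extremal_weight_ge0.
Qed.

Lemma root_num_beta (G num : {poly int}) :
  is_gcd_h n G -> num * G = sum_h n -> ~~ root (map_poly intr num) (beta j).
Proof.
move=> [_ G_max] num_G.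
have [G' def_G] : zdvd (common_factor n j) G.
  apply: G_max => m part_m; exists (reduced_h j m).
  by rewrite (h_part_factor j_gt0) // mulrC.
have common_neq0 : common_factor n j != 0.
  by rewrite expf_neq0 // monic_neq0 // monic_one_plus_Xn.
have num_G' : num * G' = \sum_(m : mult_fun n | is_partition m) reduced_h j m.
  apply: (mulIf common_neq0); rewrite -mulrA -def_G num_G /sum_h mulr_suml.
  by apply: eq_bigr => m part_m; rewrite (h_part_factor j_gt0) // mulrC.
have := ev_sum_reduced_h_neq0; rewrite -rmorph_sum -num_G' rmorphM mulf_eq0 negb_or.
by case/andP.
Qed.

End Evaluation.

Lemma lead_coef_unit_of_monic (R : idomainType) (q d : {poly R}) :
  q * d \is monic -> lead_coef d \is a GRing.unit.
Proof.
rewrite monicE lead_coefM => /eqP lead1.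
by apply/unitrPr; exists (lead_coef q); rewrite mulrC.
Qed.

Lemma poly_int_unit_of_rootless (d : {poly int}) :
    lead_coef d \is a GRing.unit -> (forall a : algC, ~~ root (map_poly intr d) a) ->
  d \is a GRing.unit.
Proof.
move=> lead_unit no_root; have [size_d1|] := eqVneq (size d) 1%N.
  by rewrite poly_unitE size_d1; move: lead_unit; rewrite lead_coefE size_d1.
rewrite -(size_map_inj_poly (@intr_inj algC)) //.
by case/closed_rootP => a; rewrite (negbTE (no_root a)).
Qed.

Lemma den_star_monic n : den_star n \is monic.
Proof. by apply: monic_prod => i _; apply/monic_exp/monic_one_plus_Xn. Qed.

Lemma root_den_star_prim n (a : algC) : root (map_poly intr (den_star n)) a ->
  exists2 j, (0 < j <= n)%N & (j.*2).-primitive_root a.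
Proof.
rewrite /root rmorph_prod horner_prod prodf_seq_eq0 => /hasP[i _].
rewrite /= rmorphXn horner_exp expf_eq0 rmorphD rmorph1 /= map_polyXn !hornerE.
case/andP=> _; rewrite addrC addr_eq0 => /eqP a_iN1.
have [k prim_k dvd_k] : {k | k.-primitive_root a & (k %| (i.+1).*2)%N}.
  by apply: prim_order_exists; rewrite ?double_gt0 // -addnn exprD a_iN1 mulrNN mulr1.
have ndvd_k : ~~ (k %| i.+1)%N.
  by rewrite (prim_order_dvd prim_k) a_iN1 eq_sym -addr_eq0 -mulr2n pnatr_eq0.
have even_k : ~~ odd k.
  apply: contra ndvd_k => odd_k; move: dvd_k; rewrite -mul2n Gauss_dvdr //.
  by rewrite coprimen2.
exists k./2; last by rewrite even_halfK.
have k2_dvd : (k./2 %| i.+1)%N.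
  by move: dvd_k; rewrite -{1}(even_halfK even_k) -!muln2 dvdn_pmul2r.
rewrite half_gt0 ?(leq_trans (dvdn_leq _ k2_dvd) (ltn_ord i)) // andbT.
rewrite ltn_neqAle (prim_order_gt0 prim_k) andbT.
by apply: contraNneq ndvd_k => <-; apply: dvd1n.
Qed.

Theorem theorem1 (n : nat) (G num den : {poly int}) :
  (1 <= n)%N ->
  is_gcd_h n G -> 0 < lead_coef G ->
  num * G = sum_h n -> den * G = den_star n ->
  zcoprime num den.
Proof.
move=> _ G_gcd _ num_G den_G d [a def_num] [b def_den].
have def_den_star : den_star n = b * G * d by rewrite -den_G def_den mulrAC.
apply: poly_int_unit_of_rootless => [|z].
  by apply: (@lead_coef_unit_of_monic _ (b * G)); rewrite -def_den_star den_star_monic.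
apply/negP => d_z.
have den_z : root (map_poly intr (den_star n)) z.
  by rewrite def_den_star rmorphM rootM d_z orbT.
have [j /andP[j_gt0 j_le_n] prim_z] := root_den_star_prim den_z.
have num_z : root (map_poly intr num) z by rewrite def_num rmorphM rootM d_z orbT.
have := Cyclotomic_roots_sub prim_z num_z (root_Cyclotomic (beta_prim j_gt0)).
exact/negP/(root_num_beta j_gt0 j_le_n G_gcd num_G).
Qed.
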